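(* Let $\mathcal C$ be a class of groups with invariant $[0,\infty)$-valued pseudo-norms which is closed under taking subgroups (with restricted pseudo-norm) and under isomorphism. Let $G=\mathsf F_n/N$ be finitely presented, where $n\in\mathbb N$ and $\mathsf F_n$ is free with basis $x_1,\dots,x_n$, and let $\ell$ be the word norm on $G$ associated with $\overline S$ for $S=\{x_1^{\pm1}N,\dots,x_n^{\pm1}N\}$. If $(G,\ell)$ is metrically LE$\mathcal C$, then $(G,\ell)$ is metrically fully residually $\mathcal C$.
   Context: $\Lambda=[0,\infty)$. A pseudo-norm on $G$ is $\ell:G\to\Lambda$ with $\ell(1)=0$, $\ell(g)=\ell(g^{-1})$, $\ell(gh)\le\ell(g)+\ell(h)$; invariant if $\ell(h^{-1}gh)=\ell(g)$. $\overline S$ is the smallest conjugation-invariant subset containing $S$; the word norm is $\ell(g)=\min\{k:g=s_1\cdots s_k,s_i\in\overline S\}$. For pseudo-normed $(G_1,\ell_1),(G_2,\ell_2)$, finite $D\subseteq G_1$ and finite $Q\subseteq\Lambda\cap\mathbb Q$ with $0\in Q$, $\varphi:G_1\to G_2$ is a $D$-$Q$-almost-homomorphism if injective on $D$, $\varphi(hg)=\varphi(h)\varphi(g)$ whenever $h,g,hg\in D$, and $\ell_1(g)\,\square\,q\iff\ell_2(\varphi(g))\,\square\,q$ for all $g\in D,q\in Q,\square\in\{<,=,>\}$. $(G,\ell)$ is metrically LE$\mathcal C$ if for all such $D,Q$ there are $(C,\ell_C)\in\mathcal C$ and a $D$-$Q$-almost-homomorphism $G\to C$; it is metrically fully residually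 $\mathcal C$ if for all such $D,Q$ there are $(C,\ell_C)\in\mathcal C$ and a group homomorphism $\varphi:G\to C$ with $\ell_C(\varphi(g))\le\ell(g)$ for all $g\in G$, which is a $D$-$Q$-almost-homomorphism. *)

From Stdlib Require Import Reals QArith List ProofIrrelevance.
Open Scope R_scope.

Record Grp := MkGrp {
  gcar :> Type;
  gmul : gcar -> gcar -> gcar;
  gone : gcar;
  ginv : gcar -> gcar;
  gmulA : forall x y z, gmul x (gmul y z) = gmul (gmul x y) z;
  gmul1l : forall x, gmul gone x = x;
  gmul1r : forall x, gmul x gone = x;
  gmulVl : forall x, gmul (ginv x) x = gone;
  gmulVr : forall x, gmul x (ginv x) = gone }.

Arguments gmul {g}. Arguments gone {g}. Arguments ginv {g}.

(** Groups equipped with a real-valued function (intended: pseudo-norm). *)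
Record PNG := MkPNG { pgrp :> Grp; pnorm : pgrp -> R }.

Definition is_pseudo_norm (G : Grp) (l : G -> R) : Prop :=
  l gone = 0 /\ (forall g, 0 <= l g) /\ (forall g, l (ginv g) = l g) /\
  (forall g h, l (gmul g h) <= l g + l h).

Definition is_inv_pseudo_norm (G : Grp) (l : G -> R) : Prop :=
  is_pseudo_norm G l /\ forall g h, l (gmul (ginv h) (gmul g h)) = l g.

Definition is_hom (G H : Grp) (f : G -> H) : Prop :=
  forall x y, f (gmul x y) = gmul (f x) (f y).

Section Sub.
Variables (G : Grp) (P : G -> Prop) (h1 : P gone)
  (hm : forall x y, P x -> P y -> P (gmul x y)) (hi : forall x, P x -> P (ginv x)).

Let S := {x : G | P x}.
Let smul (x y : S) : S := exist P (gmul (proj1_sig x) (proj1_sig y))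
   (hm _ _ (proj2_sig x) (proj2_sig y)).
Let sone : S := exist P gone h1.
Let sinv (x : S) : S := exist P (ginv (proj1_sig x)) (hi _ (proj2_sig x)).

Lemma sub_eq (u v : S) : proj1_sig u = proj1_sig v -> u = v.
Proof. destruct u, v; simpl; intros ->; f_equal; apply proof_irrelevance. Qed.

Definition sub_grp : Grp.
Proof.
refine (@MkGrp S smul sone sinv _ _ _ _ _); intros; apply sub_eq; simpl.
- apply gmulA. - apply gmul1l. - apply gmul1r. - apply gmulVl. - apply gmulVr.
Defined.
End Sub.

Definition sub_png (X : PNG) (P : X -> Prop) (h1 : P gone)
  (hm : forall x y, P x -> P y -> P (gmul x y)) (hi : forall x, P x -> P (ginv x))
  : PNG :=
  MkPNG (sub_grp X P h1 hm hi) (fun x => pnorm X (proj1_sig x)).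

Definition subgroup_closed (C : PNG -> Prop) : Prop :=
  forall (X : PNG) (P : X -> Prop) (h1 : P gone)
    (hm : forall x y, P x -> P y -> P (gmul x y)) (hi : forall x, P x -> P (ginv x)),
    C X -> C (sub_png X P h1 hm hi).

Definition iso_closed (C : PNG -> Prop) : Prop :=
  forall (X Y : PNG) (f : X -> Y), C X -> is_hom X Y f ->
    (forall x y, f x = f y -> x = y) -> (forall y, exists x, f x = y) ->
    (forall x, pnorm Y (f x) = pnorm X x) -> C Y.

Definition admissible_Q (Qs : list Q) : Prop :=
  Forall (fun q => 0 <= Q2R q) Qs /\ Exists (fun q => Q2R q = 0) Qs.

Definition almost_hom (X Y : PNG) (D : list X) (Qs : list Q) (f : X -> Y) : Prop :=
  (forall g h, In g D -> In h D -> f g = f h -> g = h) /\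
  (forall h g, In h D -> In g D -> In (gmul h g) D -> f (gmul h g) = gmul (f h) (f g)) /\
  (forall g q, In g D -> In q Qs ->
     (pnorm X g < Q2R q <-> pnorm Y (f g) < Q2R q) /\
     (pnorm X g = Q2R q <-> pnorm Y (f g) = Q2R q) /\
     (pnorm X g > Q2R q <-> pnorm Y (f g) > Q2R q)).

Definition metrically_LE (C : PNG -> Prop) (X : PNG) : Prop :=
  forall (D : list X) (Qs : list Q), admissible_Q Qs ->
    exists Y : PNG, C Y /\ exists f : X -> Y, almost_hom X Y D Qs f.

Definition metrically_fully_residually (C : PNG -> Prop) (X : PNG) : Prop :=
  forall (D : list X) (Qs : list Q), admissible_Q Qs ->
    exists Y : PNG, C Y /\ exists f : X -> Y,
      is_hom X Y f /\ (forall g, pnorm Y (f g) <= pnorm X g) /\ almost_hom X Y D Qs f.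

(** Words in the free group F_n: letters (i, true) = x_i, (i, false) = x_i^-1. *)
Definition word := list (nat * bool).
Definition valid_word (n : nat) (w : word) : Prop := Forall (fun p => (fst p < n)%nat) w.

Definition gen_pow (G : Grp) (a : nat -> G) (p : nat * bool) : G :=
  if snd p then a (fst p) else ginv (a (fst p)).

Definition eval (G : Grp) (a : nat -> G) (w : word) : G :=
  fold_right (fun p acc => gmul (gen_pow G a p) acc) gone w.

(** The congruence on words whose quotient is F_n / <<Rel>>. *)
Inductive pres_eq (Rel : list word) : word -> word -> Prop :=
| pe_refl w : pres_eq Rel w w
| pe_sym u v : pres_eq Rel u v -> pres_eq Rel v u
| pe_trans u v w : pres_eq Rel u v -> pres_eq Rel v w -> pres_eq Rel u w
| pe_cancel u v i b : pres_eq Rel (u ++ (i, b) :: (i, negb b) :: v) (u ++ v)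
| pe_rel u v r : In r Rel -> pres_eq Rel (u ++ r ++ v) (u ++ v).

(** G = F_n / N with N the normal closure of Rel, via g_i = x_i N = a i. *)
Definition presents (n : nat) (Rel : list word) (G : Grp) (a : nat -> G) : Prop :=
  Forall (valid_word n) Rel /\
  (forall g : G, exists w, valid_word n w /\ eval G a w = g) /\
  (forall u v, valid_word n u -> valid_word n v ->
     (eval G a u = eval G a v <-> pres_eq Rel u v)).

Definition in_Sbar (n : nat) (G : Grp) (a : nat -> G) (s : G) : Prop :=
  exists i b (h : G), (i < n)%nat /\ s = gmul (ginv h) (gmul (gen_pow G a (i, b)) h).

Inductive prod_len (n : nat) (G : Grp) (a : nat -> G) : G -> nat -> Prop :=
| pl_nil : prod_len n G a gone 0
| pl_cons s g k : in_Sbar n G a s -> prod_len n G a g k -> prod_len n G a (gmul s g) (S k).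

Definition is_word_norm (n : nat) (G : Grp) (a : nat -> G) (l : G -> R) : Prop :=
  forall g, exists k, prod_len n G a g k /\ l g = INR k /\
    (forall m, prod_len n G a g m -> (k <= m)%nat).

From Stdlib Require Import Reals QArith List.
From Stdlib Require Import Lra Lia ClassicalEpsilon.
Open Scope R_scope.

(* Given finite D and Q, apply the LE hypothesis to a larger finite set D'
   containing 1, the generators, and every value met while evaluating the
   relators and chosen words for the elements of D. An almost-homomorphism
   phi on D' maps every relator to 1, so g_i |-> phi(g_i) extends to a genuine
   homomorphism psi : G -> Y, and psi agrees with phi on D. Putting 1 into Q
   gives |phi(g_i)| <= 1; since the norm of Y is conjugation-invariant, every
   element of Sbar then has norm at most 1 under psi, so psi does not increase
   the word norm. The homomorphism lands in the same group Y. *)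

Section GroupFacts.
Variable G : Grp.

Lemma mul_eq1_inv (x y : G) : gmul x y = gone -> x = ginv y.
Proof.
  intro H. rewrite <- (gmul1r G x), <- (gmulVr G y), gmulA, H, gmul1l. reflexivity.
Qed.

Lemma idem_eq1 (x : G) : gmul x x = x -> x = gone.
Proof.
  intro H. transitivity (gmul (ginv x) (gmul x x)).
  - rewrite gmulA, gmulVl, gmul1l; reflexivity.
  - rewrite H. apply gmulVl.
Qed.

Lemma inv1 : ginv (@gone G) = gone.
Proof. symmetry. apply mul_eq1_inv. apply gmul1l. Qed.

End GroupFacts.

Definition partial_hom (G Y : Grp) (D : list G) (f : G -> Y) : Prop :=
  forall h g, In h D -> In g D -> In (gmul h g) D -> f (gmul h g) = gmul (f h) (f g).

Section PartialHom.
Variables (G Y : Grp) (D : list G) (f : G -> Y).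
Hypotheses (hf : partial_hom G Y D f) (hD1 : In gone D).

Lemma partial_hom1 : f gone = gone.
Proof. apply idem_eq1. rewrite <- hf, gmul1l; auto. rewrite gmul1l; auto. Qed.

Lemma partial_homV x : In x D -> In (ginv x) D -> f (ginv x) = ginv (f x).
Proof.
  intros Hx HVx. apply mul_eq1_inv.
  rewrite <- hf, gmulVl; auto using partial_hom1. rewrite gmulVl; auto.
Qed.

End PartialHom.

Lemma hom_partial_hom (G Y : Grp) (D : list G) (f : G -> Y) :
  is_hom G Y f -> partial_hom G Y D f.
Proof. intros Hf h g _ _ _. apply Hf. Qed.

Lemma hom1 (G Y : Grp) (f : G -> Y) : is_hom G Y f -> f gone = gone.
Proof. intro Hf. apply (partial_hom1 G Y (gone :: nil)); simpl; auto using hom_partial_hom. Qed.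

Lemma homV (G Y : Grp) (f : G -> Y) : is_hom G Y f -> forall x, f (ginv x) = ginv (f x).
Proof.
  intros Hf x. apply (partial_homV G Y (gone :: x :: ginv x :: nil));
    simpl; auto using hom_partial_hom.
Qed.

Lemma eval_app (G : Grp) (a : nat -> G) (u v : word) :
  eval G a (u ++ v) = gmul (eval G a u) (eval G a v).
Proof.
  induction u as [|p u IH]; simpl.
  - rewrite gmul1l; reflexivity.
  - rewrite IH, gmulA; reflexivity.
Qed.

Lemma eval_pres_eq (G : Grp) (b : nat -> G) (Rel : list word)
  (hRel : forall r, In r Rel -> eval G b r = gone) (u v : word) :
  pres_eq Rel u v -> eval G b u = eval G b v.
Proof.
  induction 1; try congruence.
  - rewrite !eval_app. f_equal. simpl. unfold gen_pow; destruct b0; simpl;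
      rewrite gmulA, ?gmulVr, ?gmulVl, gmul1l; reflexivity.
  - rewrite !eval_app, (hRel r), gmul1l by assumption. reflexivity.
Qed.

(* The values of all suffixes of [w], together with each generator of [w] and
   its inverse: the products an evaluation of [w] goes through. *)
Fixpoint eval_trace (G : Grp) (a : nat -> G) (w : word) : list G :=
  match w with
  | nil => gone :: nil
  | p :: s => eval G a (p :: s) :: a (fst p) :: ginv (a (fst p)) :: eval_trace G a s
  end.

Lemma eval_in_trace (G : Grp) (a : nat -> G) (w : word) : In (eval G a w) (eval_trace G a w).
Proof. destruct w; simpl; auto. Qed.

Lemma partial_hom_eval (G Y : Grp) (a : nat -> G) (D : list G) (f : G -> Y)
  (hf : partial_hom G Y D f) (hD1 : In gone D) (w : word) :
  incl (eval_trace G a w) D -> f (eval G a w) = eval Y (fun i => f (a i)) w.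
Proof.
  induction w as [|[i e] s IH]; intro Hincl; simpl.
  - exact (partial_hom1 G Y D f hf hD1).
  - assert (Hs : incl (eval_trace G a s) D) by (intros x Hx; apply Hincl; simpl; auto).
    assert (Ha : In (a i) D) by (apply Hincl; simpl; auto).
    assert (HVa : In (ginv (a i)) D) by (apply Hincl; simpl; auto).
    assert (Hgen : f (gen_pow G a (i, e)) = gen_pow Y (fun j => f (a j)) (i, e)).
    { unfold gen_pow; destruct e; simpl; [reflexivity | apply (partial_homV G Y D f); auto]. }
    rewrite hf, IH, Hgen; auto.
    + unfold gen_pow; destruct e; auto.
    + apply Hs, eval_in_trace.
    + apply Hincl; simpl; auto.
Qed.

Section Presentation.
Variables (n : nat) (Rel : list word) (G : Grp) (a : nat -> G).
Hypothesis hpres : presents n Rel G a.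

Definition pres_word (g : G) : word :=
  proj1_sig (constructive_indefinite_description _ (proj1 (proj2 hpres) g)).

Lemma pres_word_spec (g : G) : valid_word n (pres_word g) /\ eval G a (pres_word g) = g.
Proof. exact (proj2_sig (constructive_indefinite_description _ (proj1 (proj2 hpres) g))). Qed.

Lemma eval_relator (r : word) : In r Rel -> eval G a r = gone.
Proof.
  destruct hpres as [hvalid [_ hiff]]. intro Hr.
  change (@gone G) with (eval G a nil).
  apply hiff; [rewrite Forall_forall in hvalid; auto | constructor |].
  pose proof (pe_rel Rel nil nil r Hr) as P. simpl in P.
  rewrite app_nil_r in P. exact P.
Qed.

Section Lift.
Variables (Y : Grp) (b : nat -> Y).
Hypothesis hb : forall r, In r Rel -> eval Y b r = gone.

Definition pres_lift (g : G) : Y := eval Y b (pres_word g).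

Lemma pres_lift_eval (w : word) : valid_word n w -> pres_lift (eval G a w) = eval Y b w.
Proof.
  intro Hw. destruct (pres_word_spec (eval G a w)) as [Hv He].
  apply (eval_pres_eq Y b Rel hb). apply (proj2 (proj2 hpres)); auto.
Qed.

Lemma pres_lift_hom : is_hom G Y pres_lift.
Proof.
  intros x y. destruct (pres_word_spec x) as [Hvx <-]. destruct (pres_word_spec y) as [Hvy <-].
  rewrite <- eval_app, !pres_lift_eval, eval_app; auto.
  apply Forall_app; auto.
Qed.

Lemma pres_lift_gen (i : nat) : (i < n)%nat -> pres_lift (a i) = b i.
Proof.
  intro Hi. pose proof (pres_lift_eval ((i, true) :: nil)) as E.
  simpl in E. rewrite !gmul1r in E. apply E. repeat constructor; auto.
Qed.

End Lift.

Definition lift_support (D : list G) : list G :=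
  D ++ gone :: map a (seq 0 n) ++ flat_map (eval_trace G a) (Rel ++ map pres_word D).

Section LiftSupport.
Variable D : list G.

Lemma incl_lift_support : incl D (lift_support D).
Proof. intros x Hx. unfold lift_support. apply in_or_app; auto. Qed.

Lemma one_in_lift_support : In gone (lift_support D).
Proof. unfold lift_support. apply in_or_app; simpl; auto. Qed.

Lemma gen_in_lift_support (i : nat) : (i < n)%nat -> In (a i) (lift_support D).
Proof.
  intro Hi. unfold lift_support. apply in_or_app; right; right.
  apply in_or_app; left. apply in_map, in_seq. lia.
Qed.

Lemma trace_in_lift_support (w : word) :
  In w (Rel ++ map pres_word D) -> incl (eval_trace G a w) (lift_support D).
Proof.
  intros Hw x Hx. unfold lift_support. apply in_or_app; right; right.
  apply in_or_app; right. apply in_flat_map. eauto.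
Qed.

Variables (Y : Grp) (f : G -> Y).
Hypothesis hf : partial_hom G Y (lift_support D) f.

Lemma partial_hom_relator (r : word) : In r Rel -> eval Y (fun i => f (a i)) r = gone.
Proof.
  intro Hr. rewrite <- (partial_hom_eval G Y a (lift_support D) f hf one_in_lift_support).
  - rewrite eval_relator by exact Hr. exact (partial_hom1 G Y _ f hf one_in_lift_support).
  - apply trace_in_lift_support, in_or_app; auto.
Qed.

Lemma pres_lift_partial_hom (g : G) :
  In g D -> pres_lift Y (fun i => f (a i)) g = f g.
Proof.
  intro Hg. unfold pres_lift.
  rewrite <- (partial_hom_eval G Y a (lift_support D) f hf one_in_lift_support).
  - f_equal. apply pres_word_spec.
  - apply trace_in_lift_support, in_or_app; right. apply in_map; auto.
Qed.

End LiftSupport.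

End Presentation.

Section WordNorm.
Variables (n : nat) (G : Grp) (a : nat -> G).

Lemma word_norm_gen (l : G -> R) (i : nat) :
  is_word_norm n G a l -> (i < n)%nat -> l (a i) <= 1.
Proof.
  intros hl Hi. destruct (hl (a i)) as [k [_ [-> Hmin]]].
  replace 1 with (INR 1) by reflexivity. apply le_INR, Hmin.
  rewrite <- (gmul1r G (a i)) at 1. constructor; [|constructor].
  exists i, true, gone. split; auto. simpl. rewrite inv1, gmul1l, gmul1r. reflexivity.
Qed.

Variables (Y : PNG) (psi : G -> Y).
Hypotheses (hpsi : is_hom G Y psi) (hY : is_inv_pseudo_norm Y (pnorm Y))
  (hgen : forall i, (i < n)%nat -> pnorm Y (psi (a i)) <= 1).

Lemma hom_norm_Sbar (s : G) : in_Sbar n G a s -> pnorm Y (psi s) <= 1.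
Proof.
  destruct hY as [[_ [_ [hVnorm _]]] hJnorm].
  intros [i [e [h [Hi ->]]]].
  rewrite !hpsi, homV, hJnorm by exact hpsi.
  unfold gen_pow; destruct e; simpl; rewrite ?homV, ?hVnorm by exact hpsi; auto.
Qed.

Lemma hom_norm_prod_len (g : G) (k : nat) : prod_len n G a g k -> pnorm Y (psi g) <= INR k.
Proof.
  destruct hY as [[hnorm1 [_ [_ hsub]]] _].
  induction 1 as [|s g k Hs _ IH].
  - rewrite hom1, hnorm1 by exact hpsi. simpl; lra.
  - rewrite hpsi, S_INR. pose proof (hom_norm_Sbar s Hs). specialize (hsub (psi s) (psi g)). lra.
Qed.

Lemma hom_norm_le_word_norm (l : G -> R) (g : G) :
  is_word_norm n G a l -> pnorm Y (psi g) <= l g.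
Proof. intro hl. destruct (hl g) as [k [Hk [-> _]]]. exact (hom_norm_prod_len g k Hk). Qed.

End WordNorm.

Lemma admissible_Q_cons (q : Q) (Qs : list Q) :
  0 <= Q2R q -> admissible_Q Qs -> admissible_Q (q :: Qs).
Proof. intros Hq [HQ0 HQ1]. split; [constructor | apply Exists_cons_tl]; auto. Qed.

Lemma almost_hom_norm_le (X Y : PNG) (D : list X) (Qs : list Q) (f : X -> Y) (x : X) (q : Q) :
  almost_hom X Y D Qs f -> In x D -> In q Qs ->
  pnorm X x <= Q2R q -> pnorm Y (f x) <= Q2R q.
Proof.
  intros [_ [_ Hnorm]] Hx Hq Hle. destruct (Hnorm x q Hx Hq) as [Hlt [Heq _]].
  destruct (Rle_lt_or_eq_dec _ _ Hle); [left; apply Hlt | right; apply Heq]; auto.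
Qed.

Lemma almost_hom_restrict (X Y : PNG) (D D' : list X) (Qs Qs' : list Q) (f f' : X -> Y) :
  incl D D' -> incl Qs Qs' -> (forall g, In g D -> f' g = f g) ->
  partial_hom X Y D f' -> almost_hom X Y D' Qs' f -> almost_hom X Y D Qs f'.
Proof.
  intros HD HQ Hagree Hmul' [Hinj [_ Hnorm]]. split; [|split; [exact Hmul'|]].
  - intros g h Hg Hh. rewrite !Hagree by auto. auto.
  - intros g q Hg Hq. rewrite Hagree by auto. auto.
Qed.

Theorem corollary5p8 (C : PNG -> Prop)
  (hCnorm : forall X, C X -> is_inv_pseudo_norm X (pnorm X))
  (hCsub : subgroup_closed C) (hCiso : iso_closed C)
  (n : nat) (Rel : list word) (G : Grp) (a : nat -> G)
  (hpres : presents n Rel G a)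
  (l : G -> R) (hl : is_word_norm n G a l) :
  metrically_LE C (MkPNG G l) -> metrically_fully_residually C (MkPNG G l).
Proof.
  intros HLE D Qs HQ.
  assert (Hone : Q2R 1 = 1) by (unfold Q2R; simpl; lra).
  destruct (HLE (lift_support n Rel G a hpres D) (1%Q :: Qs)) as [Y [HY [f Hf]]].
  { apply admissible_Q_cons; [rewrite Hone; lra | exact HQ]. }
  assert (Hmul : partial_hom G Y (lift_support n Rel G a hpres D) f) by exact (proj1 (proj2 Hf)).
  pose proof (partial_hom_relator n Rel G a hpres D Y f Hmul) as hRel.
  set (psi := pres_lift n Rel G a hpres Y (fun i => f (a i))).
  assert (Hpsi : is_hom G Y psi) by exact (pres_lift_hom n Rel G a hpres Y _ hRel).
  exists Y. split; [exact HY|]. exists psi. split; [exact Hpsi|]. split.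
  - intro g. apply (hom_norm_le_word_norm n G a _ psi Hpsi (hCnorm Y HY)); auto.
    intros i Hi. unfold psi. rewrite (pres_lift_gen n Rel G a hpres Y _ hRel i Hi).
    rewrite <- Hone. apply (almost_hom_norm_le (MkPNG G l) Y _ _ f _ _ Hf); simpl; auto.
    + apply gen_in_lift_support, Hi.
    + rewrite Hone. apply (word_norm_gen n G a l i hl Hi).
  - apply (almost_hom_restrict _ _ D (lift_support n Rel G a hpres D) Qs (1%Q :: Qs) f);
      auto using hom_partial_hom, incl_lift_support, incl_tl, incl_refl.
    + apply pres_lift_partial_hom, Hmul.
Qed.
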